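(* Let $\mathbb{E}$ be a regular category and $(f,s)\colon X\rightleftarrows Y$ a split epimorphism. Then $(f,s)$ is strongly split if and only if, for every monomorphism $m\colon Y'\rightarrowtail Y$ with pullback $n\colon X'\rightarrowtail X$ of $m$ along $f$, the pair of monomorphisms $(s,n)$ is jointly strongly epic, i.e. the subobject $1_X$ is the supremum of the subobjects $s$ and $n$.
   Context: A split epimorphism is a pair $(f,s)$ with $fs=1$. A pair of morphisms with common codomain $Z$ is jointly extremally (equivalently, in a regular category, strongly) epic if it factors jointly through no non-invertible monomorphism into $Z$. A split epimorphism $(f,s)\colon X\rightleftarrows Y$ is strongly split when, for every morphism $y\colon\bar Y\to Y$, with $x\colon\bar X=\bar Y\times_YX\to X$ the pullback projection, the pair $(x,s)$ is jointly extremally epic. *)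

Set Implicit Arguments.
Unset Strict Implicit.

Record Category := {
  Obj :> Type;
  Hom : Obj -> Obj -> Type;
  idm : forall A, Hom A A;
  comp : forall A B C, Hom B C -> Hom A B -> Hom A C;
  comp_id_l : forall A B (f : Hom A B), comp (idm B) f = f;
  comp_id_r : forall A B (f : Hom A B), comp f (idm A) = f;
  comp_assoc : forall A B C D (h : Hom C D) (g : Hom B C) (f : Hom A B),
      comp h (comp g f) = comp (comp h g) f
}.

Arguments Hom {c} _ _.
Arguments idm {c} _.
Arguments comp {c} {A B C} _ _.

Notation "g \o f" := (comp g f) (at level 40, left associativity).

Section Defs.
Variable C : Category.

Definition is_mono {A B : C} (m : Hom A B) : Prop :=
  forall Z (u v : Hom Z A), m \o u = m \o v -> u = v.

Definition is_iso {A B : C} (f : Hom A B) : Prop :=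
  exists g : Hom B A, g \o f = idm A /\ f \o g = idm B.

Definition is_terminal (T : C) : Prop :=
  forall A : C, exists t : Hom A T, forall t' : Hom A T, t' = t.

Definition is_pullback {A B Z P : C} (f : Hom A Z) (g : Hom B Z)
    (p1 : Hom P A) (p2 : Hom P B) : Prop :=
  f \o p1 = g \o p2 /\
  forall Q (q1 : Hom Q A) (q2 : Hom Q B), f \o q1 = g \o q2 ->
    exists u : Hom Q P, (p1 \o u = q1 /\ p2 \o u = q2) /\
      forall u' : Hom Q P, p1 \o u' = q1 -> p2 \o u' = q2 -> u' = u.

Definition is_coequalizer {A B Q : C} (u v : Hom A B) (e : Hom B Q) : Prop :=
  e \o u = e \o v /\
  forall W (h : Hom B W), h \o u = h \o v ->
    exists k : Hom Q W, k \o e = h /\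
      forall k' : Hom Q W, k' \o e = h -> k' = k.

Definition is_regular_epi {B Q : C} (e : Hom B Q) : Prop :=
  exists (A : C) (u v : Hom A B), is_coequalizer u v e.

Definition is_regular : Prop :=
  (exists T : C, is_terminal T) /\
  (forall (A B Z : C) (f : Hom A Z) (g : Hom B Z),
      exists (P : C) (p1 : Hom P A) (p2 : Hom P B), is_pullback f g p1 p2) /\
  (forall (A B P : C) (f : Hom A B) (p1 p2 : Hom P A),
      is_pullback f f p1 p2 -> exists (Q : C) (e : Hom A Q), is_coequalizer p1 p2 e) /\
  (forall (A B Z P : C) (e : Hom A Z) (g : Hom B Z) (p1 : Hom P A) (p2 : Hom P B),
      is_regular_epi e -> is_pullback e g p1 p2 -> is_regular_epi p2).

Definition jointly_extremally_epic {A B Z : C} (a : Hom A Z) (b : Hom B Z) : Prop :=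
  forall (M : C) (m : Hom M Z) (a' : Hom A M) (b' : Hom B M),
    is_mono m -> m \o a' = a -> m \o b' = b -> is_iso m.

Definition jointly_strongly_epic {A B Z : C} (a : Hom A Z) (b : Hom B Z) : Prop :=
  forall (U V : C) (m : Hom U V) (g : Hom Z V) (ua : Hom A U) (ub : Hom B U),
    is_mono m -> m \o ua = g \o a -> m \o ub = g \o b ->
    exists d : Hom Z U, (m \o d = g /\ d \o a = ua /\ d \o b = ub) /\
      forall d' : Hom Z U, m \o d' = g -> d' \o a = ua -> d' \o b = ub -> d' = d.

Definition is_split_epi {X Y : C} (f : Hom X Y) (s : Hom Y X) : Prop :=
  f \o s = idm Y.

Definition strongly_split {X Y : C} (f : Hom X Y) (s : Hom Y X) : Prop :=
  forall (Ybar Xbar : C) (y : Hom Ybar Y) (x : Hom Xbar X) (fbar : Hom Xbar Ybar),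
    is_pullback f y x fbar -> jointly_extremally_epic x s.

End Defs.

Arguments is_regular : clear implicits.

(* A jointly extremally epic pair is jointly strongly epic as soon as
   pullbacks exist (pull the test monomorphism back and invert it), and conversely;
   this gives the forward implication at once.  For the converse, factor
   y : Ybar -> Y as a regular epi e followed by a mono m; the pullback x of f along y
   is then the pullback n of f along m precomposed with the pullback of e, a regular
   epi.  Any monomorphism through which x factors therefore also receives n, and
   joint epicity of (s, n) makes it invertible. *)

Set Implicit Arguments.
Unset Strict Implicit.

Section RegularCategory.
Variable E : Category.

Lemma regular_has_pullbacks (Hreg : is_regular E) (A B Z : E) (f : Hom A Z)
  (g : Hom B Z) :
  exists (P : E) (p1 : Hom P A) (p2 : Hom P B), is_pullback f g p1 p2.
Proof. destruct Hreg as [_ [Hpb _]]; apply Hpb. Qed.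

Lemma regular_epi_pullback_stable (Hreg : is_regular E) (A B Z P : E)
  (e : Hom A Z) (g : Hom B Z) (p1 : Hom P A) (p2 : Hom P B) :
  is_regular_epi e -> is_pullback e g p1 p2 -> is_regular_epi p2.
Proof. destruct Hreg as [_ [_ [_ Hstab]]]; apply Hstab. Qed.

Lemma regular_epi_epi (B Q : E) (e : Hom B Q) : is_regular_epi e ->
  forall W (h k : Hom Q W), h \o e = k \o e -> h = k.
Proof.
  intros [A [u [v [Hc Huniv]]]] W h k Hhk.
  destruct (Huniv W (h \o e)) as [k0 [_ Hunique]].
  { rewrite <- !comp_assoc, Hc. reflexivity. }
  rewrite (Hunique h eq_refl). symmetry. apply Hunique. symmetry; exact Hhk.
Qed.

Lemma regular_epi_mono_lift (B Q U V : E) (e : Hom B Q) (m : Hom U V)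
  (a : Hom B U) (b : Hom Q V) :
  is_regular_epi e -> is_mono m -> m \o a = b \o e ->
  exists k : Hom Q U, m \o k = b.
Proof.
  intros He Hm Hsq.
  pose proof He as [A [u [v [Hc Huniv]]]].
  destruct (Huniv U a) as [k [Hk _]].
  { apply Hm. rewrite !comp_assoc, Hsq, <- !comp_assoc, Hc. reflexivity. }
  exists k. apply (regular_epi_epi He). rewrite <- comp_assoc, Hk. exact Hsq.
Qed.

Lemma pullback_mono (A B Z P : E) (a : Hom A Z) (b : Hom B Z) (p1 : Hom P A)
  (p2 : Hom P B) : is_pullback a b p1 p2 -> is_mono b -> is_mono p1.
Proof.
  intros [Hc Huniv] Hb W u v Huv.
  assert (H2 : p2 \o u = p2 \o v).
  { apply Hb. rewrite !comp_assoc, <- Hc, <- !comp_assoc, Huv. reflexivity. }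
  destruct (Huniv W (p1 \o u) (p2 \o u)) as [w [_ Hw]].
  { rewrite !comp_assoc, Hc. reflexivity. }
  rewrite (Hw u eq_refl eq_refl). symmetry. apply Hw; symmetry; assumption.
Qed.

Lemma mono_of_kernel_pair_eq (B Q K : E) (m : Hom Q B) (k1 k2 : Hom K Q) :
  is_pullback m m k1 k2 -> k1 = k2 -> is_mono m.
Proof.
  intros [_ Huniv] Hk W u v Huv.
  destruct (Huniv W u v Huv) as [z [[Hz1 Hz2] _]].
  rewrite <- Hz1, <- Hz2, Hk. reflexivity.
Qed.

Lemma pullback_paste_left (A Q Y Xb X' X : E) (e : Hom A Q) (m : Hom Q Y)
  (f : Hom X Y) (n : Hom X' X) (f' : Hom X' Q) (x : Hom Xb X) (fb : Hom Xb A)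
  (g : Hom Xb X') :
  is_pullback f m n f' -> is_pullback f (m \o e) x fb ->
  n \o g = x -> f' \o g = e \o fb -> is_pullback e f' fb g.
Proof.
  intros [Hn Hn_univ] [_ Hout_univ] Hgx Hgf.
  split; [symmetry; exact Hgf|].
  intros W q1 q2 Hq.
  destruct (Hout_univ W (n \o q2) q1) as [u [[Hu1 Hu2] Hu_unique]].
  { rewrite comp_assoc, Hn, <- !comp_assoc, Hq. reflexivity. }
  assert (Hgu : g \o u = q2).
  { destruct (Hn_univ W (n \o q2) (f' \o q2)) as [w [_ Hw]].
    { rewrite !comp_assoc, Hn. reflexivity. }
    rewrite (Hw q2 eq_refl eq_refl). apply Hw.
    - rewrite comp_assoc, Hgx. exact Hu1.
    - rewrite comp_assoc, Hgf, <- comp_assoc, Hu2. exact Hq. }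
  exists u. split; [split; assumption|].
  intros u' H1 H2. apply Hu_unique; [|exact H1].
  rewrite <- H2, comp_assoc, Hgx. reflexivity.
Qed.

Section ImageFactorization.
Hypothesis Hreg : is_regular E.

(* The factor m is mono: both legs of its kernel pair become equal after
   precomposing with suitable pullbacks of e, which are epis by regularity. *)
Lemma coequalizer_kernel_pair_factor_mono (A B K Q : E) (y : Hom A B)
  (p1 p2 : Hom K A) (e : Hom A Q) (m : Hom Q B) :
  is_pullback y y p1 p2 -> is_coequalizer p1 p2 e -> m \o e = y -> is_mono m.
Proof.
  intros Hp He Hme.
  assert (Hre : is_regular_epi e) by (exists K, p1, p2; exact He).
  destruct (regular_has_pullbacks Hreg m m) as [Km [k1 [k2 Hk]]].
  apply (mono_of_kernel_pair_eq Hk).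
  destruct (regular_has_pullbacks Hreg e k1) as [L [l1 [l2 Hl]]].
  destruct (regular_has_pullbacks Hreg e (k2 \o l2)) as [N [n1 [n2 Hn]]].
  destruct (proj2 Hp N (l1 \o n2) n1) as [t [[Ht1 Ht2] _]].
  { rewrite <- Hme, <- !comp_assoc, (comp_assoc e l1 n2), (proj1 Hl).
    rewrite (comp_assoc m (k1 \o l2) n2), (comp_assoc m k1 l2), (proj1 Hk).
    rewrite <- !comp_assoc, (proj1 Hn), !comp_assoc. reflexivity. }
  apply (regular_epi_epi (regular_epi_pullback_stable Hreg Hre Hl)).
  apply (regular_epi_epi (regular_epi_pullback_stable Hreg Hre Hn)).
  rewrite <- (proj1 Hl), <- (proj1 Hn), <- comp_assoc, <- Ht1, <- Ht2,
    !comp_assoc, (proj1 He).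
  reflexivity.
Qed.

Lemma regular_epi_mono_factorization (A B : E) (y : Hom A B) :
  exists (Q : E) (e : Hom A Q) (m : Hom Q B),
    is_regular_epi e /\ is_mono m /\ m \o e = y.
Proof.
  destruct (regular_has_pullbacks Hreg y y) as [K [p1 [p2 Hp]]].
  destruct Hreg as [_ [_ [Hcoeq _]]].
  destruct (Hcoeq _ _ _ y p1 p2 Hp) as [Q [e He]].
  destruct (proj2 He B y (proj1 Hp)) as [m [Hme _]].
  exists Q, e, m. repeat split.
  - exists K, p1, p2; exact He.
  - exact (coequalizer_kernel_pair_factor_mono Hp He Hme).
  - exact Hme.
Qed.

Lemma pullback_cover_by_mono_pullback (X Y Yb Xb : E) (f : Hom X Y)
  (y : Hom Yb Y) (x : Hom Xb X) (fb : Hom Xb Yb) :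
  is_pullback f y x fb ->
  exists (Q X' : E) (m : Hom Q Y) (n : Hom X' X) (f' : Hom X' Q) (g : Hom Xb X'),
    is_mono m /\ is_pullback f m n f' /\ is_regular_epi g /\ n \o g = x.
Proof.
  intros Hpb.
  destruct (regular_epi_mono_factorization y) as [Q [e [m [He [Hm Hme]]]]].
  destruct (regular_has_pullbacks Hreg f m) as [X' [n [f' Hn]]].
  subst y.
  destruct (proj2 Hn Xb x (e \o fb)) as [g [[Hgx Hgf] _]].
  { rewrite comp_assoc. exact (proj1 Hpb). }
  exists Q, X', m, n, f', g. split; [exact Hm|]. split; [exact Hn|].
  split; [|exact Hgx].
  exact (regular_epi_pullback_stable Hreg He (pullback_paste_left Hn Hpb Hgx Hgf)).
Qed.

End ImageFactorization.

Lemma jointly_extremally_epic_sym (A B Z : E) (a : Hom A Z) (b : Hom B Z) :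
  jointly_extremally_epic a b -> jointly_extremally_epic b a.
Proof. intros H M m b' a' Hm Hb Ha. exact (H M m a' b' Hm Ha Hb). Qed.

Lemma jointly_extremally_epic_precomp_regular_epi (A A' B Z : E) (a : Hom A Z)
  (b : Hom B Z) (g : Hom A' A) :
  is_regular_epi g -> jointly_extremally_epic a b ->
  jointly_extremally_epic (a \o g) b.
Proof.
  intros Hg Hab M m ag' b' Hm Ha Hb.
  destruct (regular_epi_mono_lift Hg Hm Ha) as [k Hk].
  exact (Hab M m k b' Hm Hk Hb).
Qed.

Lemma jointly_strongly_epic_extremally (A B Z : E) (a : Hom A Z) (b : Hom B Z) :
  jointly_strongly_epic a b -> jointly_extremally_epic a b.
Proof.
  intros H M m a' b' Hm Ha Hb.
  assert (Ha1 : m \o a' = idm Z \o a) by (rewrite comp_id_l; exact Ha).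
  assert (Hb1 : m \o b' = idm Z \o b) by (rewrite comp_id_l; exact Hb).
  destruct (H M Z m (idm Z) a' b' Hm Ha1 Hb1) as [d [[Hmd _] _]].
  exists d. split; [|exact Hmd].
  apply Hm. rewrite comp_assoc, Hmd, comp_id_l, comp_id_r. reflexivity.
Qed.

(* Pulling the test monomorphism back along g gives a monomorphism through which
   a and b factor; it is invertible, and its inverse yields the diagonal. *)
Lemma jointly_extremally_epic_strongly (Hreg : is_regular E) (A B Z : E)
  (a : Hom A Z) (b : Hom B Z) :
  jointly_extremally_epic a b -> jointly_strongly_epic a b.
Proof.
  intros Hab U V m g ua ub Hm Hua Hub.
  destruct (regular_has_pullbacks Hreg g m) as [P [p1 [p2 Hp]]].
  destruct (proj2 Hp A a ua) as [a' [[Ha' _] _]]. { symmetry; exact Hua. }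
  destruct (proj2 Hp B b ub) as [b' [[Hb' _] _]]. { symmetry; exact Hub. }
  destruct (Hab P p1 a' b' (pullback_mono Hp Hm) Ha' Hb') as [q [_ Hpq]].
  assert (Hmd : m \o (p2 \o q) = g).
  { rewrite comp_assoc, <- (proj1 Hp), <- comp_assoc, Hpq, comp_id_r. reflexivity. }
  exists (p2 \o q). split.
  - split; [exact Hmd|].
    split; apply Hm; rewrite comp_assoc, Hmd; symmetry; assumption.
  - intros d' Hd' _ _. apply Hm. rewrite Hd', Hmd. reflexivity.
Qed.

End RegularCategory.

Theorem proposition8p2 (E : Category) (X Y : E) (f : Hom X Y) (s : Hom Y X) :
  is_regular E ->
  is_split_epi f s ->
  (strongly_split f s <->
   forall (Y' X' : E) (m : Hom Y' Y) (n : Hom X' X) (f' : Hom X' Y'),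
     is_mono m -> is_pullback f m n f' -> jointly_strongly_epic s n).
Proof.
  intros Hreg _. split.
  - intros Hss Y' X' m n f' _ Hpb.
    apply (jointly_extremally_epic_strongly Hreg).
    apply jointly_extremally_epic_sym. exact (Hss _ _ m n f' Hpb).
  - intros Hmono Yb Xb y x fb Hpb.
    destruct (pullback_cover_by_mono_pullback Hreg Hpb)
      as [Q [X' [m [n [f' [g [Hm [Hn [Hg Hgx]]]]]]]]].
    rewrite <- Hgx.
    apply (jointly_extremally_epic_precomp_regular_epi Hg).
    apply jointly_extremally_epic_sym, jointly_strongly_epic_extremally.
    exact (Hmono _ _ m n f' Hm Hn).
Qed.
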